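(* Let $\lambda>0$. For $\gamma>1$ let $B=B(\gamma)=\frac{\gamma-1}{2\gamma(\gamma+1)}$ and let $A=A(\gamma)>0$ be determined by \[2A^{\frac{\gamma+1}{2(\gamma-1)}}B^{-\frac12}\int_0^{\pi/2}(\cos\theta)^{\frac{\gamma+1}{\gamma-1}}d\theta=\lambda,\] and define $\mathcal{B}_\gamma(\xi)=\big[A-B\xi^2\big]_+^{\frac{1}{\gamma-1}}$ for $\xi\in\mathbb{R}$, where $[f]_+=\max\{f,0\}$ (so that the Barenblatt solution of $\partial_t\overline\rho_\gamma=\partial_x^2(\overline\rho_\gamma^{\,\gamma})$, $\overline\rho_\gamma(-1,\cdot)=\lambda\delta$, is $\overline\rho_\gamma(t,x)=(1+t)^{-\frac{1}{\gamma+1}}\mathcal{B}_\gamma\big(x(1+t)^{-\frac{1}{\gamma+1}}\big)$). Then \[\mathcal{B}_\gamma\longrightarrow\frac{\lambda}{2\sqrt{\pi}}e^{-\frac{\xi^2}{4}}\quad\text{in } L^\infty(\mathbb{R})\ \text{as }\gamma\to1.\] *)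

From Stdlib Require Import Reals.
From Coquelicot Require Import Coquelicot.
Open Scope R_scope.

(* Real power x^p for x >= 0 and p > 0, with the convention 0^p = 0
   (Stdlib's Rpower 0 p would be 1). *)
Definition ppow (x p : R) : R :=
  if Rlt_dec 0 x then Rpower x p else 0.

Definition pos_part (f : R) : R := Rmax f 0.

Definition Bg (g : R) : R := (g - 1) / (2 * g * (g + 1)).

Definition A_condition (lam g A : R) : Prop :=
  2 * ppow A ((g + 1) / (2 * (g - 1))) * / sqrt (Bg g)
    * RInt (fun th => ppow (cos th) ((g + 1) / (g - 1))) 0 (PI / 2) = lam.

Definition Barenblatt (A g xi : R) : R :=
  ppow (pos_part (A - Bg g * xi ^ 2)) (1 / (g - 1)).

Definition heat_profile (lam xi : R) : R :=
  lam / (2 * sqrt PI) * exp (- xi ^ 2 / 4).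

From Stdlib Require Import Reals Lra Lia.
From Coquelicot Require Import Coquelicot.
Open Scope R_scope.

(* Writing m = 1/(g-1), the profile factors as
   B_g(xi) = A^m * (1 - y/m)_+^m  with  y = xi^2 / (2 g (g+1) A),
   while the Gaussian is K e^(-b y) with K = lam/(2 sqrt pi) and b = A g (g+1)/2.
   Uniformly in y >= 0 one has |(1 - y/m)_+^m - e^(-y)| <= 8/m and
   |e^(-y) - e^(-b y)| <= 2 |1 - b|, so it suffices that A^m -> K and A -> 1.
   Solving the normalisation for A gives A^((g+1)/(2(g-1))) = lam/2 * sqrt(1/(2 g p I_p^2))
   with p = (g+1)/(g-1) and I_p = int_0^(pi/2) cos^p; sandwiching I_p between the
   Wallis integrals W_(floor p + 1) <= I_p <= W_(floor p) and using
   (n+1) W_(n+1) W_n = pi/2 yields p I_p^2 -> pi/2, hence both limits. *)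

Lemma exp_le x y : x <= y -> exp x <= exp y.
Proof. intros [Hlt | ->]; [apply Rlt_le, exp_increasing |]; lra. Qed.

Lemma ln_le_sub1 x : 0 < x -> ln x <= x - 1.
Proof. intros Hx. pose proof (exp_ineq1_le (ln x)) as Hexp. rewrite exp_ln in Hexp by exact Hx. lra. Qed.

Lemma ln_1_sub_le x : x < 1 -> ln (1 - x) <= - x.
Proof. intros Hx. pose proof (ln_le_sub1 (1 - x)). lra. Qed.

Lemma ln_1_sub_ge x : 0 <= x <= 1 / 2 -> - x - 2 * x ^ 2 <= ln (1 - x).
Proof.
  intros Hx.
  assert (Hinv : ln (/ (1 - x)) <= x / (1 - x)).
  { replace (x / (1 - x)) with (/ (1 - x) - 1) by (field; lra).
    apply ln_le_sub1, Rinv_0_lt_compat; lra. }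
  rewrite ln_Rinv in Hinv by lra.
  assert (x / (1 - x) <= x + 2 * x ^ 2).
  { apply (Rmult_le_reg_r (1 - x)); [lra |].
    unfold Rdiv; rewrite Rmult_assoc, Rinv_l by lra. nra. }
  lra.
Qed.

Lemma mul_exp_neg_half_le y : 0 <= y -> y * exp (- (y / 2)) <= 2.
Proof.
  intros Hy. pose proof (exp_ineq1_le (y / 2)). pose proof (exp_pos (y / 2)).
  rewrite exp_Ropp. apply (Rmult_le_reg_r (exp (y / 2))); [apply exp_pos |].
  rewrite Rmult_assoc, Rinv_l by lra. lra.
Qed.

Lemma sqr_mul_exp_neg_le y : 0 <= y -> y ^ 2 * exp (- y) <= 4.
Proof.
  intros Hy. pose proof (mul_exp_neg_half_le y Hy).
  assert (0 <= y * exp (- (y / 2))) by (pose proof (exp_pos (- (y / 2))); nra).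
  replace (y ^ 2 * exp (- y)) with ((y * exp (- (y / 2))) ^ 2).
  - nra.
  - replace (- y) with (- (y / 2) + - (y / 2)) by field. rewrite exp_plus. ring.
Qed.

Lemma ppow_Rpower x p : 0 < x -> ppow x p = Rpower x p.
Proof. intros Hx. unfold ppow. destruct (Rlt_dec 0 x); [reflexivity | lra]. Qed.

Lemma ppow_nonpos x p : x <= 0 -> ppow x p = 0.
Proof. intros Hx. unfold ppow. destruct (Rlt_dec 0 x); [lra | reflexivity]. Qed.

Lemma ppow_mul_l a x p : 0 < a -> ppow (a * x) p = Rpower a p * ppow x p.
Proof.
  intros Ha. destruct (Rle_lt_dec x 0) as [Hx | Hx].
  - rewrite !ppow_nonpos by nra. ring.
  - rewrite !ppow_Rpower by nra. symmetry. apply Rpower_mult_distr; lra.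
Qed.

Lemma pos_part_mul_l a x : 0 <= a -> pos_part (a * x) = a * pos_part x.
Proof. intros Ha. unfold pos_part. rewrite <- RmaxRmult by exact Ha. f_equal. ring. Qed.

Lemma continuous_ppow p x : 0 < p -> continuous (fun y => ppow y p) x.
Proof.
  intros Hp. destruct (Rlt_le_dec 0 x) as [Hx | [Hx | ->]].
  - apply (continuous_ext_loc _ (fun y => exp (p * ln y))).
    + exists (mkposreal x Hx). intros y Hy. apply Rabs_lt_between' in Hy. simpl in Hy.
      rewrite ppow_Rpower by lra. reflexivity.
    + apply (@ex_derive_continuous R_AbsRing R_NormedModule). auto_derive. exact Hx.
  - apply (continuous_ext_loc _ (fun _ => 0)); [| apply continuous_const].
    exists (mkposreal (- x) ltac:(lra)). intros y Hy. apply Rabs_lt_between' in Hy. simpl in Hy.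
    rewrite ppow_nonpos by lra. reflexivity.
  - apply filterlim_locally. intros eps. rewrite ppow_nonpos by lra.
    assert (Hr : 0 < Rpower eps (/ p)) by apply exp_pos.
    exists (mkposreal _ Hr). intros y Hy. change (Rabs (y - 0) < Rpower eps (/ p)) in Hy.
    change (Rabs (ppow y p - 0) < eps). rewrite !Rminus_0_r in *.
    destruct (Rle_lt_dec y 0) as [Hy0 | Hy0].
    + rewrite ppow_nonpos, Rabs_R0 by exact Hy0. apply cond_pos.
    + rewrite ppow_Rpower, Rabs_pos_eq by (try apply Rlt_le, exp_pos; exact Hy0).
      rewrite Rabs_pos_eq in Hy by lra.
      replace (pos eps) with (Rpower (Rpower eps (/ p)) p)
        by (rewrite Rpower_mult, Rinv_l, Rpower_1 by (apply cond_pos || lra); reflexivity).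
      apply Rlt_Rpower_l; lra.
Qed.

Definition compound (m y : R) : R := ppow (pos_part (1 - y / m)) m.

Lemma compound_le_exp m y : 0 < m -> 0 <= y -> 0 <= compound m y <= exp (- y).
Proof.
  intros Hm Hy. unfold compound, pos_part. pose proof (exp_pos (- y)).
  destruct (Rle_lt_dec (1 - y / m) 0) as [Hle | Hlt].
  - rewrite Rmax_right, ppow_nonpos by lra. lra.
  - rewrite Rmax_left, ppow_Rpower by lra. split; [apply Rlt_le, exp_pos |].
    apply exp_le. pose proof (ln_1_sub_le (y / m) ltac:(lra)).
    replace (- y) with (m * - (y / m)) by (field; lra). apply Rmult_le_compat_l; lra.
Qed.

Lemma compound_ge m y : 0 < m -> 0 <= y <= m / 2 -> exp (- y - 2 * y ^ 2 / m) <= compound m y.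
Proof.
  intros Hm Hy.
  assert (Hx : 0 <= y / m <= 1 / 2).
  { split; [apply Rdiv_le_0_compat; lra |].
    apply (Rmult_le_reg_r m); [exact Hm |]. unfold Rdiv. rewrite Rmult_assoc, Rinv_l by lra. lra. }
  unfold compound, pos_part. rewrite Rmax_left, ppow_Rpower by lra.
  apply exp_le. pose proof (ln_1_sub_ge (y / m) Hx).
  replace (- y - 2 * y ^ 2 / m) with (m * (- (y / m) - 2 * (y / m) ^ 2)) by (field; lra).
  apply Rmult_le_compat_l; lra.
Qed.

Lemma compound_exp_dist m y : 0 < m -> 0 <= y -> Rabs (compound m y - exp (- y)) <= 8 / m.
Proof.
  intros Hm Hy. pose proof (compound_le_exp m y Hm Hy) as [Hc0 Hc1].
  rewrite Rabs_left1 by lra.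
  assert (H8 : 2 / m <= 8 / m) by (apply Rmult_le_compat_r; [apply Rlt_le, Rinv_0_lt_compat |]; lra).
  destruct (Rle_lt_dec y (m / 2)) as [Hsmall | Hlarge].
  - pose proof (compound_ge m y Hm (conj Hy Hsmall)) as Hlow.
    (* [e^-y - e^(-y - 2y^2/m) <= e^-y (2 y^2 / m)] and [y^2 e^-y <= 4] *)
    replace (- y - 2 * y ^ 2 / m) with (- y + - (2 * y ^ 2 / m)) in Hlow by ring.
    rewrite exp_plus in Hlow. pose proof (exp_ineq1_le (- (2 * y ^ 2 / m))).
    pose proof (sqr_mul_exp_neg_le y Hy). pose proof (exp_pos (- y)).
    assert (exp (- y) * (2 * y ^ 2 / m) <= 8 / m).
    { replace (exp (- y) * (2 * y ^ 2 / m)) with (2 * (y ^ 2 * exp (- y)) / m) by (field; lra).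
      apply Rmult_le_compat_r; [apply Rlt_le, Rinv_0_lt_compat |]; lra. }
    nra.
  - assert (exp (- y) <= 2 / m).
    { apply Rle_trans with (exp (- (m / 2))); [apply exp_le; lra |].
      rewrite exp_Ropp. replace (2 / m) with (/ (m / 2)) by (field; lra).
      apply Rinv_le_contravar; [lra |]. pose proof (exp_ineq1_le (m / 2)). lra. }
    lra.
Qed.

Lemma exp_neg_mul_sub s t y : 1 / 2 <= s <= t -> 0 <= y ->
  0 <= exp (- (s * y)) - exp (- (t * y)) <= 2 * (t - s).
Proof.
  intros Hst Hy.
  replace (exp (- (t * y))) with (exp (- (s * y)) * exp (- ((t - s) * y)))
    by (rewrite <- exp_plus; f_equal; ring).
  pose proof (exp_pos (- (s * y))). pose proof (exp_ineq1_le (- ((t - s) * y))).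
  assert (exp (- ((t - s) * y)) <= 1) by (rewrite <- exp_0; apply exp_le; nra).
  assert (exp (- (s * y)) * y <= 2).
  { apply Rle_trans with (y * exp (- (y / 2))); [| apply mul_exp_neg_half_le; exact Hy].
    rewrite Rmult_comm. apply Rmult_le_compat_l; [exact Hy |]. apply exp_le. nra. }
  split; nra.
Qed.

Lemma exp_neg_mul_dist b y : 1 / 2 <= b -> 0 <= y ->
  Rabs (exp (- y) - exp (- (b * y))) <= 2 * Rabs (1 - b).
Proof.
  intros Hb Hy. destruct (Rle_lt_dec b 1) as [Hb1 | Hb1].
  - pose proof (exp_neg_mul_sub b 1 y (conj Hb Hb1) Hy) as Hsub. rewrite Rmult_1_l in Hsub.
    rewrite Rabs_left1, Rabs_pos_eq by lra. lra.
  - pose proof (exp_neg_mul_sub 1 b y ltac:(lra) Hy) as Hsub. rewrite Rmult_1_l in Hsub.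
    rewrite Rabs_pos_eq, Rabs_left1 by lra. lra.
Qed.

Lemma Barenblatt_compound A g xi : 0 < A -> 1 < g ->
  Barenblatt A g xi = Rpower A (1 / (g - 1)) * compound (1 / (g - 1)) (xi ^ 2 / (2 * g * (g + 1) * A)).
Proof.
  intros HA Hg. unfold Barenblatt, compound, Bg.
  rewrite <- ppow_mul_l, <- pos_part_mul_l by lra.
  do 2 f_equal. field. lra.
Qed.

Lemma Barenblatt_gauss_dist A g K xi : 0 < A -> 1 < g -> 0 <= K ->
  1 / 2 <= A * g * (g + 1) / 2 ->
  Rabs (Barenblatt A g xi - K * exp (- xi ^ 2 / 4))
  <= Rabs (Rpower A (1 / (g - 1)) - K) + 8 * K * (g - 1) + 2 * K * Rabs (1 - A * g * (g + 1) / 2).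
Proof.
  intros HA Hg HK Hb.
  set (m := 1 / (g - 1)). set (b := A * g * (g + 1) / 2).
  set (y := xi ^ 2 / (2 * g * (g + 1) * A)).
  assert (Hm : 0 < m) by (apply Rdiv_lt_0_compat; lra).
  assert (Hy : 0 <= y) by (apply Rdiv_le_0_compat; [apply pow2_ge_0 | nra]).
  assert (Hgauss : - xi ^ 2 / 4 = - (b * y)) by (unfold b, y; field; nra).
  rewrite Barenblatt_compound, Hgauss by assumption. fold m y.
  pose proof (compound_le_exp m y Hm Hy) as [Hc0 Hc1].
  assert (Hc : compound m y <= 1) by (pose proof (exp_le (- y) 0 ltac:(lra)); rewrite exp_0 in *; lra).
  pose proof (compound_exp_dist m y Hm Hy) as Hdist.
  replace (8 / m) with (8 * (g - 1)) in Hdist by (unfold m; field; lra).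
  pose proof (exp_neg_mul_dist b y Hb Hy) as Hscale.
  replace (Rpower A m * compound m y - K * exp (- (b * y))) with
    ((Rpower A m - K) * compound m y + K * (compound m y - exp (- y)) + K * (exp (- y) - exp (- (b * y))))
    by ring.
  repeat (eapply Rle_trans; [apply Rabs_triang | apply Rplus_le_compat]).
  - rewrite Rabs_mult, (Rabs_pos_eq (compound m y)) by exact Hc0.
    pose proof (Rabs_pos (Rpower A m - K)). nra.
  - rewrite Rabs_mult, Rabs_pos_eq by exact HK. nra.
  - rewrite Rabs_mult, Rabs_pos_eq by exact HK. nra.
Qed.

Definition wallis (n : nat) : R := RInt (fun t => cos t ^ n) 0 (PI / 2).

Lemma continuous_cos_pow n t : continuous (fun t => cos t ^ n) t.
Proof. apply (@ex_derive_continuous R_AbsRing R_NormedModule). auto_derive. exact I. Qed.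

Lemma ex_RInt_cos_pow n : ex_RInt (fun t => cos t ^ n) 0 (PI / 2).
Proof. apply (@ex_RInt_continuous R_CompleteNormedModule). intros t _. apply continuous_cos_pow. Qed.

Lemma cos_in_01 t : 0 < t < PI / 2 -> 0 < cos t <= 1.
Proof. intros Ht. split; [apply cos_gt_0 | apply COS_bound]; lra. Qed.

Lemma wallis_0 : wallis 0 = PI / 2.
Proof. unfold wallis. simpl. rewrite RInt_const. compute. lra. Qed.

Lemma wallis_1 : wallis 1 = 1.
Proof.
  unfold wallis. apply is_RInt_unique.
  replace 1 with (minus (sin (PI / 2)) (sin 0)) by (rewrite sin_PI2, sin_0; compute; lra).
  apply (is_RInt_derive sin).
  - intros t _. auto_derive; [exact I | ring].
  - intros t _. apply continuous_cos_pow.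
Qed.

Lemma wallis_rec n : INR (S (S n)) * wallis (S (S n)) = INR (S n) * wallis n.
Proof.
  set (f t := INR (S (S n)) * cos t ^ S (S n) - INR (S n) * cos t ^ n).
  (* [f] is the derivative of [sin t * cos t ^ (n + 1)] once [sin^2] is replaced by [1 - cos^2]. *)
  assert (Hparts : is_RInt f 0 (PI / 2) (minus (sin (PI / 2) * cos (PI / 2) ^ S n) (sin 0 * cos 0 ^ S n))).
  { apply (is_RInt_derive (fun t => sin t * cos t ^ S n)).
    - intros t _. auto_derive; [exact I |].
      change (match n with 0%nat => 1 | S _ => INR n + 1 end) with (INR (S n)).
      replace (sin t * (1 * - sin t * (INR (S n) * cos t ^ n)))
        with (- (sin t * sin t) * (INR (S n) * cos t ^ n)) by ring.
      replace (sin t * sin t) with (1 - cos t * cos t) by (pose proof (sin2_cos2 t); unfold Rsqr in *; lra).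
      unfold f. rewrite (S_INR (S n)). simpl. ring.
    - intros t _. apply (@ex_derive_continuous R_AbsRing R_NormedModule). unfold f. auto_derive. exact I. }
  assert (Hvalue : is_RInt f 0 (PI / 2) (INR (S (S n)) * wallis (S (S n)) - INR (S n) * wallis n)).
  { apply (is_RInt_minus (V := R_NormedModule)); apply (is_RInt_scal (V := R_NormedModule));
      apply (RInt_correct (V := R_CompleteNormedModule)), ex_RInt_cos_pow. }
  replace (minus _ _) with 0 in Hparts by (rewrite cos_PI2, sin_0; compute; ring).
  pose proof (filterlim_locally_unique _ _ _ Hparts Hvalue). lra.
Qed.

Lemma wallis_prod n : INR (S n) * wallis (S n) * wallis n = PI / 2.
Proof.
  induction n as [| n IH].
  - rewrite wallis_0, wallis_1. simpl. lra.
  - rewrite wallis_rec, <- IH. ring.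
Qed.

Lemma wallis_gt0 n : 0 < wallis n.
Proof.
  apply RInt_gt_0; [pose proof PI_RGT_0; lra | |].
  - intros t Ht. apply pow_lt, cos_in_01, Ht.
  - intros t _. apply continuous_cos_pow.
Qed.

Lemma wallis_S_le n : wallis (S n) <= wallis n.
Proof.
  apply RInt_le; [pose proof PI_RGT_0; lra | apply ex_RInt_cos_pow | apply ex_RInt_cos_pow |].
  intros t Ht. destruct (cos_in_01 t Ht). simpl.
  pose proof (pow_le (cos t) n ltac:(lra)). nra.
Qed.

Lemma wallis_sqr_bounds n : (1 <= n)%nat ->
  PI / (2 * (INR n + 1)) <= wallis n ^ 2 <= PI / (2 * INR n).
Proof.
  intros Hn. pose proof (wallis_S_le n). pose proof (wallis_gt0 (S n)).
  assert (HnR : 1 <= INR n) by (apply (le_INR 1); exact Hn).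
  split.
  - pose proof (wallis_prod n) as Hprod. rewrite S_INR in Hprod.
    replace (PI / (2 * (INR n + 1))) with (wallis (S n) * wallis n) by (field_simplify_eq; lra).
    nra.
  - destruct n as [| k]; [lia |].
    pose proof (wallis_prod k). pose proof (wallis_S_le k).
    replace (PI / (2 * INR (S k))) with (wallis (S k) * wallis k) by (field_simplify_eq; lra).
    nra.
Qed.

Definition wallisR (p : R) : R := RInt (fun t => ppow (cos t) p) 0 (PI / 2).

Lemma continuous_ppow_cos p t : 0 < p -> continuous (fun t => ppow (cos t) p) t.
Proof.
  intros Hp. apply (continuous_comp cos (fun y => ppow y p));
    [apply continuous_cos | apply continuous_ppow, Hp].
Qed.

Lemma ex_RInt_wallisR p : 0 < p -> ex_RInt (fun t => ppow (cos t) p) 0 (PI / 2).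
Proof.
  intros Hp. apply (@ex_RInt_continuous R_CompleteNormedModule). intros t _. apply continuous_ppow_cos, Hp.
Qed.

Lemma wallisR_gt0 p : 0 < p -> 0 < wallisR p.
Proof.
  intros Hp. apply RInt_gt_0; [pose proof PI_RGT_0; lra | |].
  - intros t Ht. destruct (cos_in_01 t Ht). rewrite ppow_Rpower by lra. apply exp_pos.
  - intros t _. apply continuous_ppow_cos, Hp.
Qed.

Lemma Rpower_pow_sandwich c p n : 0 < c <= 1 -> INR n <= p <= INR n + 1 ->
  c ^ S n <= Rpower c p <= c ^ n.
Proof.
  intros Hc Hp. rewrite <- !Rpower_pow, S_INR by lra.
  assert (Hln : ln c <= 0) by (rewrite <- ln_1; apply ln_le; lra).
  unfold Rpower. split; apply exp_le.
  - assert ((INR n + 1 - p) * ln c <= 0) by (apply Rmult_le_0_l; lra). lra.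
  - assert ((p - INR n) * ln c <= 0) by (apply Rmult_le_0_l; lra). lra.
Qed.

Lemma wallisR_sandwich p n : 0 < p -> INR n <= p <= INR n + 1 ->
  wallis (S n) <= wallisR p <= wallis n.
Proof.
  intros Hp Hn. pose proof PI_RGT_0.
  assert (Hpt : forall t, 0 < t < PI / 2 ->
    cos t ^ S n <= ppow (cos t) p <= cos t ^ n).
  { intros t Ht. destruct (cos_in_01 t Ht). rewrite ppow_Rpower by lra.
    apply Rpower_pow_sandwich; lra. }
  split; apply RInt_le.
  1, 5: lra.
  1, 5: apply ex_RInt_cos_pow.
  1, 3: apply ex_RInt_wallisR, Hp.
  all: intros t Ht; pose proof (Hpt t Ht); lra.
Qed.

Lemma wallisR_sqr_asymptotics p : 2 <= p -> Rabs (p * wallisR p ^ 2 - PI / 2) <= PI / (p - 1).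
Proof.
  intros Hp. pose proof PI_RGT_0.
  destruct (nfloor_ex p ltac:(lra)) as [n Hn].
  assert (Hn1 : (1 <= n)%nat) by (destruct n; [simpl in Hn; lra | lia]).
  pose proof (wallisR_sandwich p n ltac:(lra) ltac:(lra)) as [Hlo Hhi].
  pose proof (wallis_sqr_bounds n Hn1) as [_ HWn].
  pose proof (wallis_sqr_bounds (S n) ltac:(lia)) as [HWSn _]. rewrite S_INR in HWSn.
  set (N := INR n) in *.
  pose proof (wallis_gt0 (S n)).
  assert (HN : 1 <= N) by (apply (le_INR 1); exact Hn1).
  assert (Hsq : wallis (S n) ^ 2 <= wallisR p ^ 2 <= wallis n ^ 2) by (split; apply pow_incr; lra).
  (* With [N = floor p]: bound above by [p <= N + 1], [W_p <= W_N], below by [N <= p], [W_(N+1) <= W_p]. *)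
  assert (Hup : p * wallisR p ^ 2 <= PI / 2 + PI / (2 * N)).
  { apply Rle_trans with ((N + 1) * (PI / (2 * N))); [| right; field; lra].
    apply Rmult_le_compat; try lra. apply pow2_ge_0. }
  assert (Hdown : PI / 2 - PI / (N + 2) <= p * wallisR p ^ 2).
  { apply Rle_trans with (N * (PI / (2 * (N + 1 + 1)))); [right; field; lra |].
    apply Rmult_le_compat; try lra. apply Rlt_le, Rdiv_lt_0_compat; lra. }
  assert (PI / (2 * N) <= PI / (p - 1)) by (apply Rmult_le_compat_l; [| apply Rinv_le_contravar]; lra).
  assert (PI / (N + 2) <= PI / (p - 1)) by (apply Rmult_le_compat_l; [| apply Rinv_le_contravar]; lra).
  apply Rabs_le. lra.
Qed.

Lemma filterlim_Rmult {T} {F : (T -> Prop) -> Prop} {FF : Filter F} (f g : T -> R) a b :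
  filterlim f F (locally a) -> filterlim g F (locally b) ->
  filterlim (fun x => f x * g x) F (locally (a * b)).
Proof. intros Hf Hg. exact (filterlim_comp_2 f g Rmult Hf Hg (filterlim_mult a b)). Qed.

Lemma filterlim_Rpower {T} {F : (T -> Prop) -> Prop} {FF : Filter F} (f e : T -> R) c k :
  0 < c -> filterlim f F (locally c) -> filterlim e F (locally k) ->
  filterlim (fun x => Rpower (f x) (e x)) F (locally (Rpower c k)).
Proof.
  intros Hc Hf He. unfold Rpower.
  apply (filterlim_comp _ _ _ (fun x => e x * ln (f x)) exp _ (locally (k * ln c)));
    [| apply continuous_exp].
  apply filterlim_Rmult; [exact He |].
  exact (filterlim_comp _ _ _ f ln F _ _ Hf (continuous_ln c Hc)).
Qed.

Lemma filterlim_at_right_continuous (h : R -> R) x :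
  continuous h x -> filterlim h (at_right x) (locally (h x)).
Proof.
  intros Hh. apply (filterlim_comp _ _ _ (fun y => y) h _ (locally x)); [apply filter_le_within | exact Hh].
Qed.

Lemma filterlim_Rabs_lt {T} {F : (T -> Prop) -> Prop} {FF : Filter F} (f : T -> R) l e :
  filterlim f F (locally l) -> 0 < e -> F (fun x => Rabs (f x - l) < e).
Proof. intros Hf He. exact (proj1 (filterlim_locally f l) Hf (mkposreal e He)). Qed.

Lemma at_right_interval x (P : R -> Prop) :
  at_right x P -> exists d, 0 < d /\ forall y, x < y < x + d -> P y.
Proof.
  intros [d Hd]. exists d. split; [apply cond_pos |].
  intros y Hy. apply Hd; [apply Rabs_lt_between'; lra | lra].
Qed.

Lemma filterlim_at_right_of_lin_bound (f : R -> R) x l C r : 0 < r ->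
  (forall y, x < y < x + r -> Rabs (f y - l) <= C * (y - x)) ->
  filterlim f (at_right x) (locally l).
Proof.
  intros Hr Hf. apply filterlim_locally. intros eps.
  assert (Hd : 0 < Rmin r (eps / (Rabs C + 1))).
  { apply Rmin_pos; [exact Hr | apply Rdiv_lt_0_compat; [apply cond_pos | pose proof (Rabs_pos C); lra]]. }
  exists (mkposreal _ Hd). intros y Hy Hxy. change (Rabs (y - x) < Rmin r (eps / (Rabs C + 1))) in Hy.
  change (Rabs (f y - l) < eps). rewrite Rabs_pos_eq in Hy by lra.
  pose proof (Rmin_l r (eps / (Rabs C + 1))). pose proof (Rmin_r r (eps / (Rabs C + 1))).
  pose proof (Rle_abs C). pose proof (Rabs_pos C). pose proof (cond_pos eps).
  apply Rle_lt_trans with (Rabs C * (y - x)); [pose proof (Hf y ltac:(lra)); nra |].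
  apply Rle_lt_trans with (Rabs C * (eps / (Rabs C + 1))); [nra |].
  apply (Rmult_lt_reg_r (Rabs C + 1)); [lra |]. field_simplify; lra.
Qed.

Definition wallisQ (g : R) : R := (g + 1) / (g - 1) * wallisR ((g + 1) / (g - 1)) ^ 2.

Lemma wallisQ_limit : filterlim wallisQ (at_right 1) (locally (PI / 2)).
Proof.
  apply (filterlim_at_right_of_lin_bound _ 1 _ (PI / 2) 2); [lra |].
  intros g Hg. unfold wallisQ.
  assert (Hp : 2 <= (g + 1) / (g - 1)).
  { apply (Rmult_le_reg_r (g - 1)); [lra |]. unfold Rdiv. rewrite Rmult_assoc, Rinv_l by lra. lra. }
  eapply Rle_trans; [apply wallisR_sqr_asymptotics, Hp |]. right. field. lra.
Qed.

Definition A_solution (lam g : R) : R :=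
  Rpower (lam / 2 * sqrt (/ (2 * g * wallisQ g))) (2 * (g - 1) / (g + 1)).

Lemma A_condition_solution lam g A : 1 < g -> 0 < A -> A_condition lam g A -> A = A_solution lam g.
Proof.
  intros Hg HA Hcond. unfold A_condition in Hcond. fold (wallisR ((g + 1) / (g - 1))) in Hcond.
  rewrite ppow_Rpower in Hcond by exact HA.
  set (I := wallisR ((g + 1) / (g - 1))) in *.
  assert (HI : 0 < I) by (apply wallisR_gt0, Rdiv_lt_0_compat; lra).
  assert (HB : 0 < Bg g) by (apply Rdiv_lt_0_compat; nra).
  pose proof (sqrt_lt_R0 _ HB).
  (* [B = 1 / (2 g p)] with [p = (g + 1) / (g - 1)], so [sqrt B / I = sqrt (/ (2 g p I^2))] *)
  assert (Hbase : Rpower A ((g + 1) / (2 * (g - 1))) = lam / 2 * sqrt (/ (2 * g * wallisQ g))).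
  { unfold wallisQ. fold I.
    replace (/ (2 * g * ((g + 1) / (g - 1) * I ^ 2))) with (Bg g * (/ I) ^ 2) by (unfold Bg; field; lra).
    rewrite sqrt_mult_alt, sqrt_pow2 by (try apply Rlt_le, Rinv_0_lt_compat; lra).
    rewrite <- Hcond. field. lra. }
  unfold A_solution. rewrite <- Hbase, Rpower_mult.
  replace ((g + 1) / (2 * (g - 1)) * (2 * (g - 1) / (g + 1))) with 1 by (field; lra).
  symmetry. apply Rpower_1, HA.
Qed.

Section Limits.

Variable lam : R.
Hypothesis lam_gt0 : 0 < lam.

Lemma A_solution_base_limit :
  filterlim (fun g => lam / 2 * sqrt (/ (2 * g * wallisQ g))) (at_right 1) (locally (lam / (2 * sqrt PI))).
Proof.
  pose proof PI_RGT_0.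
  replace (lam / (2 * sqrt PI)) with (lam / 2 * sqrt (/ (2 * 1 * (PI / 2))))
    by (rewrite sqrt_inv; replace (2 * 1 * (PI / 2)) with PI by field;
        field; apply Rgt_not_eq, sqrt_lt_R0; lra).
  apply (filterlim_comp _ _ _ (fun g => 2 * g * wallisQ g) (fun z => lam / 2 * sqrt (/ z))
    _ (locally (2 * 1 * (PI / 2)))).
  - apply filterlim_Rmult; [| apply wallisQ_limit].
    apply filterlim_at_right_continuous with (h := fun g => 2 * g).
    apply (@ex_derive_continuous R_AbsRing R_NormedModule). auto_derive. exact I.
  - change (continuous (fun z => lam / 2 * sqrt (/ z)) (2 * 1 * (PI / 2))).
    apply (@ex_derive_continuous R_AbsRing R_NormedModule). auto_derive.
    repeat split; [lra | apply Rinv_0_lt_compat; lra].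
Qed.

Lemma A_solution_limit : filterlim (A_solution lam) (at_right 1) (locally 1).
Proof.
  assert (HK : 0 < lam / (2 * sqrt PI)) by (pose proof (sqrt_lt_R0 PI PI_RGT_0); apply Rdiv_lt_0_compat; lra).
  assert (Hexp : filterlim (fun g => 2 * (g - 1) / (g + 1)) (at_right 1) (locally (2 * (1 - 1) / (1 + 1)))).
  { apply filterlim_at_right_continuous with (h := fun g => 2 * (g - 1) / (g + 1)).
    apply (@ex_derive_continuous R_AbsRing R_NormedModule). auto_derive. lra. }
  replace (2 * (1 - 1) / (1 + 1)) with 0 in Hexp by field.
  pose proof (filterlim_Rpower _ _ _ _ HK A_solution_base_limit Hexp) as Hlim.
  rewrite Rpower_O in Hlim by exact HK. exact Hlim.
Qed.

Lemma A_solution_Rpower_limit :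
  filterlim (fun g => Rpower (A_solution lam g) (1 / (g - 1))) (at_right 1) (locally (lam / (2 * sqrt PI))).
Proof.
  assert (HK : 0 < lam / (2 * sqrt PI)) by (pose proof (sqrt_lt_R0 PI PI_RGT_0); apply Rdiv_lt_0_compat; lra).
  assert (Hexp : filterlim (fun g => 2 / (g + 1)) (at_right 1) (locally (2 / (1 + 1)))).
  { apply filterlim_at_right_continuous with (h := fun g => 2 / (g + 1)).
    apply (@ex_derive_continuous R_AbsRing R_NormedModule). auto_derive. lra. }
  replace (2 / (1 + 1)) with 1 in Hexp by field.
  pose proof (filterlim_Rpower _ _ _ _ HK A_solution_base_limit Hexp) as Hlim.
  rewrite Rpower_1 in Hlim by exact HK.
  refine (filterlim_within_ext _ _ _ _ Hlim).
  intros g Hg. unfold A_solution. rewrite Rpower_mult. f_equal. field. lra.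
Qed.

End Limits.

Lemma Barenblatt_uniform_limit (A : R -> R) K : 0 < K ->
  (forall g, 1 < g -> 0 < A g) ->
  filterlim A (at_right 1) (locally 1) ->
  filterlim (fun g => Rpower (A g) (1 / (g - 1))) (at_right 1) (locally K) ->
  forall eps, 0 < eps ->
  exists delta, 0 < delta /\
    forall g, 1 < g < 1 + delta ->
      forall xi, Rabs (Barenblatt (A g) g xi - K * exp (- xi ^ 2 / 4)) <= eps.
Proof.
  intros HK HA HA1 Hpeak eps Heps.
  assert (Hscale : filterlim (fun g => A g * g * (g + 1) / 2) (at_right 1) (locally 1)).
  { apply (filterlim_ext (fun g => A g * (g * (g + 1) / 2))); [intros g; field |].
    replace 1 with (1 * (1 * (1 + 1) / 2)) at 2 by field.
    apply filterlim_Rmult; [exact HA1 |].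
    apply filterlim_at_right_continuous with (h := fun g => g * (g + 1) / 2).
    apply (@ex_derive_continuous R_AbsRing R_NormedModule). auto_derive. exact I. }
  assert (Heps6 : 0 < Rmin (1 / 2) (eps / (6 * K))) by (apply Rmin_pos; [| apply Rdiv_lt_0_compat]; lra).
  pose proof (filterlim_Rabs_lt _ _ (eps / 3) Hpeak ltac:(lra)) as Hpeak_near.
  pose proof (filterlim_Rabs_lt _ _ _ Hscale Heps6) as Hscale_near.
  destruct (at_right_interval 1 _ (filter_and _ _ Hpeak_near Hscale_near)) as [d [Hd Hnear]].
  exists (Rmin d (eps / (24 * K))). split; [apply Rmin_pos; [| apply Rdiv_lt_0_compat]; lra |].
  intros g Hg xi.
  pose proof (Rmin_l d (eps / (24 * K))). pose proof (Rmin_r d (eps / (24 * K))).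
  pose proof (Rmin_l (1 / 2) (eps / (6 * K))). pose proof (Rmin_r (1 / 2) (eps / (6 * K))).
  destruct (Hnear g ltac:(lra)) as [Hclose_peak Hclose_scale].
  apply Rabs_lt_between' in Hclose_scale.
  eapply Rle_trans; [apply Barenblatt_gauss_dist; try apply HA; lra |].
  assert (8 * K * (g - 1) <= eps / 3).
  { apply Rle_trans with (8 * K * (eps / (24 * K))); [apply Rmult_le_compat_l; lra | right; field; lra]. }
  assert (2 * K * Rabs (1 - A g * g * (g + 1) / 2) <= eps / 3).
  { apply Rle_trans with (2 * K * (eps / (6 * K))); [| right; field; lra].
    apply Rmult_le_compat_l; [lra |]. apply Rabs_le. lra. }
  lra.
Qed.

Theorem proposition3 (lam : R) (A : R -> R) :
  0 < lam ->
  (forall g, 1 < g -> 0 < A g /\ A_condition lam g (A g)) ->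
  forall eps, 0 < eps ->
  exists delta, 0 < delta /\
    forall g, 1 < g < 1 + delta ->
      forall xi, Rabs (Barenblatt (A g) g xi - heat_profile lam xi) <= eps.
Proof.
  intros Hlam HA.
  assert (HAsol : forall g, 1 < g -> A_solution lam g = A g)
    by (intros g Hg; destruct (HA g Hg); symmetry; apply A_condition_solution; assumption).
  apply Barenblatt_uniform_limit.
  - pose proof (sqrt_lt_R0 PI PI_RGT_0). apply Rdiv_lt_0_compat; lra.
  - apply HA.
  - exact (filterlim_within_ext _ _ _ HAsol (A_solution_limit lam Hlam)).
  - refine (filterlim_within_ext _ _ _ _ (A_solution_Rpower_limit lam Hlam)).
    intros g Hg. rewrite HAsol by exact Hg. reflexivity.
Qed.
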